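(* Let $\mathbf{A}=(\mathcal{P},\mathcal{L},\parallel)$ and $\mathbf{A}'=(\mathcal{P}',\mathcal{L}',\parallel')$ be affine spaces with $\dim\mathbf{A}'\ge 3$. Suppose that $\varphi:\mathcal{L}\to\mathcal{L}'$ is a bijection satisfying $$a\sim b\implies a^\varphi\sim' b^\varphi\quad\text{for all }a,b\in\mathcal{L}.$$ Then $$\lambda:\mathcal{P}\to\mathcal{P}',\qquad a\cap b\mapsto a^\varphi\cap b^\varphi\quad(a,b\in\mathcal{L},\ a\approx b)$$ is a well-defined injection that maps collinear triples of points to collinear triples and non-collinear triples to non-collinear triples. Moreover, $\mathcal{L}(Q)^\varphi=\mathcal{L}'(Q^\lambda)$ for all $Q\in\mathcal{P}$.
   Context: An affine space $\mathbf{A}=(\mathcal{P},\mathcal{L},\parallel)$ has point set $\mathcal{P}$, line set $\mathcal{L}$ (lines viewed as subsets of $\mathcal{P}$) and parallelism $\parallel$. Two lines $a,b$ are related, $a\sim b$, if $a\cap b\neq\emptyset$; adjacent, $a\approx b$, if $a\sim b$ and $a\ne b$; analogously $\sim'$ in $\mathbf{A}'$. For a point $Q\in\mathcal{P}$, $\mathcal{L}(Q)$ denotes the star of lines with centre $Q$, i.e. the set of all lines of $\mathbf{A}$ through $Q$; similarly $\mathcal{L}'(Q')$ in $\mathbf{A}'$. Images are written $x^\varphi$, and $\mathcal{L}(Q)^\varphi=\{x^\varphi: x\in\mathcal{L}(Q)\}$. *)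

(* abstract (synthetic) affine spaces in the sense of
   Lenz / Buekenhout: points, lines (with an incidence relation), and a
   parallelism on lines. *)
Set Implicit Arguments.


Record AffineSpace := {
  point : Type;
  line : Type;
  inc : point -> line -> Prop;
  par : line -> line -> Prop;
  ax_join : forall p q, p <> q -> exists l, inc p l /\ inc q l;
  ax_join_uniq : forall p q l m, p <> q -> inc p l -> inc q l ->
                  inc p m -> inc q m -> l = m;
  ax_line2 : forall l, exists p q, p <> q /\ inc p l /\ inc q l;
  ax_par_refl : forall l, par l l;
  ax_par_sym : forall l m, par l m -> par m l;
  ax_par_trans : forall l m n, par l m -> par m n -> par l n;
  ax_euclid : forall p l, exists m, inc p m /\ par m l;
  ax_euclid_uniq : forall p l m1 m2, inc p m1 -> par m1 l ->
                     inc p m2 -> par m2 l -> m1 = m2;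
  ax_triangle : forall a b c a' b' lab lac lbc la'b' m1 m2,
      (~ exists l, inc a l /\ inc b l /\ inc c l) ->
      inc a lab -> inc b lab -> inc a lac -> inc c lac ->
      inc b lbc -> inc c lbc -> a' <> b' -> inc a' la'b' -> inc b' la'b' ->
      par lab la'b' ->
      inc a' m1 -> par m1 lac -> inc b' m2 -> par m2 lbc ->
      exists c', inc c' m1 /\ inc c' m2;
  ax_rank : exists a b c, ~ exists l, inc a l /\ inc b l /\ inc c l
}.

Arguments inc {a} _ _ : rename.
Arguments par {a} _ _ : rename.

Section Notions.
Variable A : AffineSpace.

Definition related (a b : line A) : Prop := exists p, inc p a /\ inc p b.
Definition adjacent (a b : line A) : Prop := related a b /\ a <> b.

Definition collinear (p q r : point A) : Prop :=
  exists l, inc p l /\ inc q l /\ inc r l.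

Definition subspace (S : point A -> Prop) : Prop :=
  (forall p q l, S p -> S q -> p <> q -> inc p l -> inc q l ->
     forall x, inc x l -> S x) /\
  (forall p l m, S p -> (forall x, inc x l -> S x) -> inc p m -> par m l ->
     forall x, inc x m -> S x).

Definition span3 (p q r : point A) (x : point A) : Prop :=
  forall S, subspace S -> S p -> S q -> S r -> S x.

(* dim A >= 3 : no subspace spanned by three points (i.e. no plane,
   line or point) is the whole point set *)
Definition dim_ge3 : Prop :=
  forall p q r, exists x, ~ span3 p q r x.

End Notions.

Arguments related {A} _ _.
Arguments adjacent {A} _ _.
Arguments collinear {A} _ _ _.
Arguments subspace {A} _.
Arguments span3 {A} _ _ _ _.

From Stdlib Require Import Classical ClassicalEpsilon.

(* Let phi be a bijection between the lines of A and A' preserving "meet".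
   1. For a point Q of A, the images of any two distinct lines a, b through Q
      meet in a point X, and X lies on phi c for EVERY line c through Q:
      otherwise phi a, phi b, phi c form a triangle spanning a proper
      subspace S of A' (dim A' >= 3); every image phi k then meets S (through
      a line of A joining Q to a point of k), which fails for the preimage k
      of a line parallel to phi a through a point outside S.
   2. Choosing such a common point for every Q gives a map lambda sending
      all lines through Q to lines through Q^lambda; it is the map a∩b ↦
      a^phi∩b^phi of the statement.
   3. lambda is injective: if two points collided, lambda would be constant,
      but some line of A' misses that constant value.
   4. The star of Q is mapped ONTO the star of Q^lambda (injectivity plus
      uniqueness of the line through two points), which yields preservation
      of collinearity and of non-collinearity. *)

Section AffineFacts.
Variable A : AffineSpace.

Definition line_in (S : point A -> Prop) (l : line A) : Prop :=
  forall x, inc x l -> S x.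

Lemma meet_uniq (a b : line A) (X Y : point A) :
  a <> b -> inc X a -> inc X b -> inc Y a -> inc Y b -> X = Y.
Proof.
  intros Hab HXa HXb HYa HYb.
  destruct (classic (X = Y)) as [|HXY]; [assumption|].
  exfalso. exact (Hab (@ax_join_uniq A X Y a b HXY HXa HYa HXb HYb)).
Qed.

Lemma point_off_line (l : line A) : exists R, ~ inc R l.
Proof.
  destruct (ax_rank A) as [a [b [c Hnc]]].
  destruct (classic (inc a l)); [| eauto].
  destruct (classic (inc b l)); [| eauto].
  destruct (classic (inc c l)); [| eauto].
  exfalso. apply Hnc. eauto.
Qed.

Lemma two_lines_through (l0 : line A) (Q : point A) :
  exists a b, a <> b /\ inc Q a /\ inc Q b.
Proof.
  destruct (ax_euclid A Q l0) as [a [HQa _]].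
  destruct (point_off_line a) as [R HR].
  assert (HQR : Q <> R) by (intros ->; contradiction).
  destruct (@ax_join A Q R HQR) as [b [HQb HRb]].
  exists a, b. split; [intros ->; contradiction | auto].
Qed.

(* As soon as the space has a line, every point is missed by some line:
   the parallel to a line through X taken through a point outside it. *)
Lemma line_avoiding_point (l0 : line A) (X : point A) : exists l, ~ inc X l.
Proof.
  destruct (ax_euclid A X l0) as [a [HXa _]].
  destruct (point_off_line a) as [R HR].
  destruct (ax_euclid A R a) as [m [HRm Hma]].
  exists m. intro HXm.
  assert (m = a) as -> by exact (ax_euclid_uniq A X a m a HXm Hma HXa (ax_par_refl A a)).
  contradiction.
Qed.

Lemma subspace_join (S : point A -> Prop) (p q : point A) (l : line A) :
  subspace S -> S p -> S q -> p <> q -> inc p l -> inc q l -> line_in S l.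
Proof. intros [Hjoin _]. exact (Hjoin p q l). Qed.

Lemma parallel_escape (S : point A -> Prop) (l k : line A) (x : point A) :
  subspace S -> line_in S l -> ~ S x -> inc x k -> par k l ->
  forall p, inc p k -> ~ S p.
Proof.
  intros [_ Hpar] Hl Hx Hxk Hkl p Hpk Hp.
  exact (Hx (Hpar p l k Hp Hl Hpk Hkl x Hxk)).
Qed.

(* Let u, v, w be lines of a subspace S, where w avoids the common point X
   of u <> v.  Any line meeting u, v and w has two distinct points in S,
   hence lies in S. *)
Lemma line_across_triangle (S : point A -> Prop) (u v w m : line A) (X : point A) :
  subspace S -> line_in S u -> line_in S v -> line_in S w ->
  u <> v -> inc X u -> inc X v -> ~ inc X w ->
  related m u -> related m v -> related m w -> line_in S m.
Proof.
  intros HS Hu Hv Hw Huv HXu HXv HXw [p1 [H1m H1u]] [p2 [H2m H2v]] [p3 [H3m H3w]].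
  destruct (classic (p1 = p2)) as [<- | H12].
  - assert (p1 = X) as -> by exact (meet_uniq u v p1 X Huv H1u H2v HXu HXv).
    assert (HX3 : X <> p3) by (intros ->; contradiction).
    exact (subspace_join S X p3 m HS (Hu X H1u) (Hw p3 H3w) HX3 H1m H3m).
  - exact (subspace_join S p1 p2 m HS (Hu p1 H1u) (Hv p2 H2v) H12 H1m H2m).
Qed.

End AffineFacts.

Arguments line_in {A} _ _.

Lemma proper_subspace (A : AffineSpace) (hdim : dim_ge3 A) (X Y Z : point A) :
  exists S x, subspace S /\ S X /\ S Y /\ S Z /\ ~ S x.
Proof.
  destruct (hdim X Y Z) as [x Hx].
  apply NNPP. intro Hno. apply Hx. intros S HS HX HY HZ.
  apply NNPP. intro HSx. apply Hno. exists S, x. auto.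
Qed.

Lemma dim_ge3_has_line (A : AffineSpace) (hdim : dim_ge3 A) : inhabited (line A).
Proof.
  destruct (ax_rank A) as [X _].
  destruct (proper_subspace A hdim X X X) as [S [x [_ [HX [_ [_ Hx]]]]]].
  assert (HXx : X <> x) by (intros ->; contradiction).
  destruct (@ax_join A X x HXx) as [l _]. exact (inhabits l).
Qed.

Section LineBijection.
Variables A A' : AffineSpace.
Variable phi : line A -> line A'.
Hypothesis phi_inj : forall a b, phi a = phi b -> a = b.
Hypothesis phi_surj : forall a', exists a, phi a = a'.
Hypothesis hrel : forall a b, related a b -> related (phi a) (phi b).

Lemma phi_neq (a b : line A) : a <> b -> phi a <> phi b.
Proof. intros Hab E. exact (Hab (phi_inj a b E)). Qed.

(* If the images of three lines a <> b, c through Q lie in a subspace S and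
   phi c avoids the point X = phi a ∩ phi b, then every image line meets S:
   for k not through Q, join Q to a point of k; the image of that join
   crosses the triangle phi a, phi b, phi c, so lies in S, and meets phi k. *)
Lemma images_meet_subspace (S : point A' -> Prop) (Q : point A)
    (a b c : line A) (X : point A') :
  subspace S -> line_in S (phi a) -> line_in S (phi b) -> line_in S (phi c) ->
  a <> b -> inc Q a -> inc Q b -> inc Q c ->
  inc X (phi a) -> inc X (phi b) -> ~ inc X (phi c) ->
  forall k, exists p, inc p (phi k) /\ S p.
Proof.
  intros HS Ha Hb Hc Hab HQa HQb HQc HXa HXb HXc k.
  destruct (classic (inc Q k)) as [HQk | HQk].
  - destruct (hrel k a) as [p [Hpk Hpa]]; [exists Q; auto|].
    exists p. split; [exact Hpk | exact (Ha p Hpa)].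
  - destruct (ax_line2 A k) as [P [_ [_ [HPk _]]]].
    assert (HQP : Q <> P) by (intros ->; contradiction).
    destruct (@ax_join A Q P HQP) as [m [HQm HPm]].
    assert (Hm : line_in S (phi m)).
    { apply (line_across_triangle A' S (phi a) (phi b) (phi c) (phi m) X);
        auto using phi_neq; apply hrel; exists Q; auto. }
    destruct (hrel m k) as [p [Hpm Hpk]]; [exists P; auto|].
    exists p. split; [exact Hpk | exact (Hm p Hpm)].
Qed.

Lemma star_center (hdim : dim_ge3 A') (Q : point A) (a b : line A) (X : point A') :
  a <> b -> inc Q a -> inc Q b -> inc X (phi a) -> inc X (phi b) ->
  forall c, inc Q c -> inc X (phi c).
Proof.
  intros Hab HQa HQb HXa HXb c HQc. apply NNPP. intro HXc.
  pose proof (phi_neq a b Hab) as Hab'.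
  destruct (hrel c a) as [Y [HYc HYa]]; [exists Q; auto|].
  destruct (hrel c b) as [Z [HZc HZb]]; [exists Q; auto|].
  assert (HXY : X <> Y) by (intros ->; contradiction).
  assert (HXZ : X <> Z) by (intros ->; contradiction).
  assert (HYZ : Y <> Z).
  { intros <-. exact (HXY (meet_uniq A' _ _ X Y Hab' HXa HXb HYa HZb)). }
  destruct (proper_subspace A' hdim X Y Z) as [S [x [HS [SX [SY [SZ Sx]]]]]].
  assert (Ha : line_in S (phi a)) by exact (subspace_join A' S X Y _ HS SX SY HXY HXa HYa).
  assert (Hb : line_in S (phi b)) by exact (subspace_join A' S X Z _ HS SX SZ HXZ HXb HZb).
  assert (Hc : line_in S (phi c)) by exact (subspace_join A' S Y Z _ HS SY SZ HYZ HYc HZc).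
  destruct (ax_euclid A' x (phi a)) as [k' [Hxk Hka]].
  destruct (phi_surj k') as [k <-].
  destruct (images_meet_subspace S Q a b c X HS Ha Hb Hc Hab HQa HQb HQc HXa HXb HXc k)
    as [p [Hpk Sp]].
  exact (parallel_escape A' S (phi a) (phi k) x HS Ha Sx Hxk Hka p Hpk Sp).
Qed.

Lemma point_map_exists (hdim : dim_ge3 A') :
  exists lam : point A -> point A', forall Q c, inc Q c -> inc (lam Q) (phi c).
Proof.
  destruct (dim_ge3_has_line A' hdim) as [l0'].
  destruct (phi_surj l0') as [l0 _].
  assert (Hcenter : forall Q, exists X, forall c, inc Q c -> inc X (phi c)).
  { intro Q. destruct (two_lines_through A l0 Q) as [a [b [Hab [HQa HQb]]]].
    destruct (hrel a b) as [X [HXa HXb]]; [exists Q; auto|].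
    exists X. exact (star_center hdim Q a b X Hab HQa HQb HXa HXb). }
  exists (fun Q => proj1_sig (constructive_indefinite_description _ (Hcenter Q))).
  intros Q. exact (proj2_sig (constructive_indefinite_description _ (Hcenter Q))).
Qed.

Section PointMap.
Variable lam : point A -> point A'.
Hypothesis lam_star : forall Q c, inc Q c -> inc (lam Q) (phi c).

(* If two distinct points P, Q of a line n collide, every point R off n
   collides with them: lam R lies on the distinct images of RP and RQ. *)
Lemma lam_collapse (P Q : point A) (n : line A) :
  P <> Q -> lam P = lam Q -> inc P n -> inc Q n ->
  forall R, ~ inc R n -> lam R = lam P.
Proof.
  intros HPQ E HPn HQn R HRn.
  assert (HRP : R <> P) by (intros ->; contradiction).
  assert (HRQ : R <> Q) by (intros ->; contradiction).
  destruct (@ax_join A R P HRP) as [m1 [HR1 HP1]].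
  destruct (@ax_join A R Q HRQ) as [m2 [HR2 HQ2]].
  assert (Hm : m1 <> m2).
  { intros <-. apply HRn.
    rewrite <- (@ax_join_uniq A P Q m1 n HPQ HP1 HQ2 HPn HQn). exact HR1. }
  apply (meet_uniq A' (phi m1) (phi m2)); auto using phi_neq.
  rewrite E. auto.
Qed.

Lemma lam_constant_of_collision (P Q : point A) :
  P <> Q -> lam P = lam Q -> forall R, lam R = lam P.
Proof.
  intros HPQ E R.
  destruct (@ax_join A P Q HPQ) as [n [HPn HQn]].
  destruct (classic (inc R n)) as [HRn | HRn]; [| exact (lam_collapse P Q n HPQ E HPn HQn R HRn)].
  destruct (classic (R = P)) as [-> | HRP]; [reflexivity|].
  destruct (point_off_line A n) as [T HTn].
  assert (ET : lam T = lam P) by exact (lam_collapse P Q n HPQ E HPn HQn T HTn).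
  assert (HPT : P <> T) by (intros ->; contradiction).
  destruct (@ax_join A P T HPT) as [m [HPm HTm]].
  assert (HRm : ~ inc R m).
  { intro HRm. apply HTn.
    rewrite <- (@ax_join_uniq A P R m n (not_eq_sym HRP) HPm HRm HPn HRn). exact HTm. }
  exact (lam_collapse P T m HPT (eq_sym ET) HPm HTm R HRm).
Qed.

(* Step 3: lam is injective, since some line of A' misses a would-be
   constant value, while its preimage has points. *)
Lemma lam_injective (P Q : point A) : lam P = lam Q -> P = Q.
Proof.
  intro E. apply NNPP. intro HPQ.
  pose proof (lam_constant_of_collision P Q HPQ E) as Hconst.
  destruct (@ax_join A P Q HPQ) as [n _].
  destruct (line_avoiding_point A' (phi n) (lam P)) as [l' Hl'].
  destruct (phi_surj l') as [l <-].
  destruct (ax_line2 A l) as [R [_ [_ [HRl _]]]].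
  apply Hl'. rewrite <- (Hconst R). exact (lam_star R l HRl).
Qed.

Lemma lam_star_image (Q : point A) (l' : line A') :
  inc (lam Q) l' <-> exists l, inc Q l /\ phi l = l'.
Proof.
  split.
  - intro HQl'. destruct (phi_surj l') as [l <-]. exists l. split; [|reflexivity].
    apply NNPP. intro HQl.
    destruct (ax_line2 A l) as [P [_ [_ [HPl _]]]].
    assert (HQP : Q <> P) by (intros ->; contradiction).
    destruct (@ax_join A Q P HQP) as [m [HQm HPm]].
    assert (Hlam : lam Q <> lam P) by (intro E; exact (HQP (lam_injective Q P E))).
    assert (phi m = phi l) as Eml
      by exact (@ax_join_uniq A' _ _ _ _ Hlam (lam_star Q m HQm) (lam_star P m HPm) HQl' (lam_star P l HPl)).
    apply HQl. rewrite <- (phi_inj m l Eml). exact HQm.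
  - intros [l [HQl <-]]. exact (lam_star Q l HQl).
Qed.

Lemma lam_collinear (P Q R : point A) :
  collinear P Q R -> collinear (lam P) (lam Q) (lam R).
Proof. intros [l [HP [HQ HR]]]. exists (phi l). auto. Qed.

(* Three image points on a line l' come from points on one preimage line. *)
Lemma lam_noncollinear (P Q R : point A) :
  ~ collinear P Q R -> ~ collinear (lam P) (lam Q) (lam R).
Proof.
  intros Hnc [l' [HP [HQ HR]]]. apply Hnc.
  destruct (proj1 (lam_star_image P l') HP) as [l1 [HPl1 <-]].
  destruct (proj1 (lam_star_image Q _) HQ) as [l2 [HQl2 E2]].
  destruct (proj1 (lam_star_image R _) HR) as [l3 [HRl3 E3]].
  rewrite (phi_inj _ _ E2) in HQl2. rewrite (phi_inj _ _ E3) in HRl3.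
  exists l1. auto.
Qed.

End PointMap.
End LineBijection.

Theorem theorem2 (A A' : AffineSpace) (phi : line A -> line A')
  (phi_inj : forall a b, phi a = phi b -> a = b)
  (phi_surj : forall a', exists a, phi a = a')
  (hdim : dim_ge3 A')
  (hrel : forall a b, related a b -> related (phi a) (phi b)) :
  exists lambda : point A -> point A',
    (forall a b Q, adjacent a b -> inc Q a -> inc Q b ->
        inc (lambda Q) (phi a) /\ inc (lambda Q) (phi b)) /\
    (forall P Q, lambda P = lambda Q -> P = Q) /\
    (forall P Q R, collinear P Q R ->
        collinear (lambda P) (lambda Q) (lambda R)) /\
    (forall P Q R, ~ collinear P Q R ->
        ~ collinear (lambda P) (lambda Q) (lambda R)) /\
    (forall Q (l' : line A'),
        inc (lambda Q) l' <-> exists l, inc Q l /\ phi l = l').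
Proof.
  destruct (point_map_exists A A' phi phi_inj phi_surj hrel hdim) as [lam lam_star].
  exists lam. split; [|split; [|split; [|split]]].
  - intros a b Q _ HQa HQb. split; apply lam_star; assumption.
  - exact (lam_injective A A' phi phi_inj phi_surj lam lam_star).
  - exact (lam_collinear A A' phi lam lam_star).
  - exact (lam_noncollinear A A' phi phi_inj phi_surj lam lam_star).
  - exact (lam_star_image A A' phi phi_inj phi_surj lam lam_star).
Qed.
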